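(* Let $k\ge 1$, $t\ge 0$, $n\geq 2k+t$ and $1\leq r \leq n-k-t+1$ be integers. Let $\mathcal{F} \subseteq\binom{[n]}{k+t}$ be shifted with $|\mathcal{F}|\geq r$. If $r \leq n-k-t$, then $|\mathcal{F}(\bar{n})|\geq r$. If $r=n-k-t+1$, then $|\mathcal{F}(\bar{n})|\geq r-1$.
   Context: A family $\mathcal{F}\subseteq 2^{[n]}$ is shifted if for every $F\in\mathcal{F}$ and all $i<j$ with $i\notin F$, $j\in F$, we have $(F\setminus\{j\})\cup\{i\}\in\mathcal{F}$. $\mathcal{F}(\bar n)=\{F\in\mathcal{F}: n\notin F\}$. $\binom{[n]}{m}$ denotes the $m$-subsets of $[n]=\{1,\dots,n\}$. *)

From mathcomp Require Import all_boot.
Set Implicit Arguments. Unset Strict Implicit. Unset Printing Implicit Defensive.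

(* Ground set [n] = {1,...,n} is modelled by 'I_n = {0,...,n-1}
   (element i : 'I_n stands for i+1; the order is preserved). *)

Definition shifted (n : nat) (FF : {set {set 'I_n}}) : Prop :=
  forall (F : {set 'I_n}) (i j : 'I_n),
    F \in FF -> (i < j)%N -> i \notin F -> j \in F ->
    i |: (F :\ j) \in FF.

Definition avoid_last (n : nat) (FF : {set {set 'I_n}}) : {set {set 'I_n}} :=
  [set F in FF | [forall x in F, (x : nat) != n.-1]].

Definition uniform (n m : nat) (FF : {set {set 'I_n}}) : Prop :=
  forall F, F \in FF -> #|F| = m.

(* A member F of a shifted family that contains the last element x can be
   shifted at x to every i outside F; the n - |F| sets i |: (F :\ x) are
   distinct and avoid x.  So either no member contains x, and F(bar n) is
   the whole family, or |F(bar n)| >= n - (k + t). *)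

From mathcomp Require Import all_boot.
From mathcomp Require Import zify.

Set Implicit Arguments.
Unset Strict Implicit.

Lemma setU1D1_inj (T : finType) (A : {set T}) (x : T) :
  {in ~: A &, injective (fun i => i |: (A :\ x))}.
Proof.
move=> i j; rewrite !inE => iA jA eq_ij.
have : i \in j |: (A :\ x) by rewrite -eq_ij setU11.
by rewrite !inE (negbTE iA) andbF orbF => /eqP.
Qed.

Lemma avoid_last_sub (n : nat) (FF : {set {set 'I_n}}) : avoid_last FF \subset FF.
Proof. by apply/subsetP => F; rewrite inE => /andP []. Qed.

Lemma shift_last_avoid_last (n : nat) (FF : {set {set 'I_n}}) F (i x : 'I_n) :
  shifted FF -> F \in FF -> x \in F -> x = n.-1 :> nat -> i \notin F ->
  i |: (F :\ x) \in avoid_last FF.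
Proof.
move=> shFF FF_F Fx x_last Fi.
have i_ne_x : (i : nat) != x by apply: contraNneq Fi => /val_inj ->.
have i_lt_x : i < x by have := ltn_ord i; lia.
rewrite inE shFF //=; apply/forallP => y; apply/implyP.
rewrite !inE -x_last => /orP [/eqP ->|/andP [y_x _]].
  by rewrite neq_ltn i_lt_x.
by rewrite (inj_eq val_inj).
Qed.

Lemma card_avoid_last_shifted (n : nat) (FF : {set {set 'I_n}}) F (x : 'I_n) :
  shifted FF -> F \in FF -> x \in F -> x = n.-1 :> nat ->
  n - #|F| <= #|avoid_last FF|.
Proof.
move=> shFF FF_F Fx x_last.
have shifts_sub : [set i |: (F :\ x) | i in ~: F] \subset avoid_last FF.
  apply/subsetP => G /imsetP [i]; rewrite inE => Fi ->.
  exact: shift_last_avoid_last.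
have := subset_leq_card shifts_sub.
by rewrite (card_in_imset (@setU1D1_inj _ F x)) cardsCs card_ord setCK.
Qed.

Lemma avoid_last_eq_or_large (m n : nat) (FF : {set {set 'I_n}}) :
  uniform m FF -> shifted FF ->
  avoid_last FF = FF \/ n - m <= #|avoid_last FF|.
Proof.
move=> unFF shFF.
have [|] := eqVneq (avoid_last FF) FF; first by left.
rewrite eqEsubset avoid_last_sub /= => /subsetPn [F FF_F].
rewrite inE FF_F /= negb_forall => /existsP [x].
rewrite negb_imply negbK => /andP [Fx /eqP x_last].
by right; rewrite -(unFF F FF_F); apply: card_avoid_last_shifted Fx x_last.
Qed.

Theorem lemma2p2 (k t n r : nat) (FF : {set {set 'I_n}}) :
  1 <= k -> 2 * k + t <= n -> 1 <= r -> r <= n - k - t + 1 ->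
  uniform (k + t) FF -> shifted FF -> r <= #|FF| ->
  (r <= n - k - t -> r <= #|avoid_last FF|) /\
  (r = n - k - t + 1 -> r - 1 <= #|avoid_last FF|).
Proof.
move=> _ _ _ _ unFF shFF r_le_FF.
have [->|large] := avoid_last_eq_or_large unFF shFF; split; lia.
Qed.
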